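(* Let $\alpha\in\mathbb{R}\setminus\{0\}$, let $\delta^{\star}(\alpha)=1/\alpha^2$ if $\alpha\le 2$ and $\delta^{\star}(\alpha)=\frac{1}{2\alpha}\exp\{1-\frac{\alpha}{2}\}$ if $\alpha>2$, let $|\delta|\le\delta^{\star}(\alpha)$, and let $C(u,v)=uv+\delta(1-e^{\alpha(u-u^2)})(1-e^{\alpha(v-v^2)})$ on $[0,1]^2$. If $\delta\ge 0$ then $C$ is positively quadrant dependent, i.e. $C(u,v)\ge uv$ for all $(u,v)\in[0,1]^2$; if $\delta\le0$ then $C$ is negatively quadrant dependent, i.e. $C(u,v)\le uv$ for all $(u,v)\in[0,1]^2$. *)

From Stdlib Require Import Reals.
Open Scope R_scope.

Definition delta_star (alpha : R) : R :=
  if Rle_dec alpha 2 then 1 / alpha ^ 2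
  else (1 / (2 * alpha)) * exp (1 - alpha / 2).

Definition Cop (alpha delta u v : R) : R :=
  u * v + delta * (1 - exp (alpha * (u - u ^ 2))) * (1 - exp (alpha * (v - v ^ 2))).

Definition in01 (x : R) : Prop := 0 <= x <= 1.

From Stdlib Require Import Reals Lra.
Open Scope R_scope.

(* On [0,1] the exponents alpha (u - u^2) and alpha (v - v^2) have the sign of
   alpha, so the two factors 1 - e^(...) of the perturbation share a sign and
   their product is nonnegative; hence C(u,v) - uv has the sign of delta. *)

Lemma one_sub_exp_nonpos (x : R) : 0 <= x -> 1 - exp x <= 0.
Proof. intros Hx. pose proof (exp_ineq1_le x). lra. Qed.

Lemma one_sub_exp_nonneg (x : R) : x <= 0 -> 0 <= 1 - exp x.
Proof.
  intros Hx. destruct (Rle_or_lt (exp x) 1) as [Hle | Hgt]; [lra |].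
  rewrite <- exp_0 in Hgt. apply exp_lt_inv in Hgt. lra.
Qed.

Lemma one_sub_exp_mul_nonneg (x y : R) :
  0 <= x * y -> 0 <= (1 - exp x) * (1 - exp y).
Proof.
  intros Hxy.
  destruct (Rle_or_lt 0 x) as [Hx | Hx]; destruct (Rle_or_lt 0 y) as [Hy | Hy].
  - pose proof (one_sub_exp_nonpos x Hx). pose proof (one_sub_exp_nonpos y Hy). nra.
  - assert (x = 0) as -> by nra. rewrite exp_0. lra.
  - assert (y = 0) as -> by nra. rewrite exp_0. lra.
  - assert (Hx' : x <= 0) by lra. assert (Hy' : y <= 0) by lra.
    pose proof (one_sub_exp_nonneg x Hx'). pose proof (one_sub_exp_nonneg y Hy'). nra.
Qed.

Lemma in01_sub_sqr_nonneg (u : R) : in01 u -> 0 <= u - u ^ 2.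
Proof. unfold in01. intros Hu. nra. Qed.

Lemma Cop_perturbation_nonneg (alpha u v : R) : in01 u -> in01 v ->
  0 <= (1 - exp (alpha * (u - u ^ 2))) * (1 - exp (alpha * (v - v ^ 2))).
Proof.
  intros Hu Hv. apply one_sub_exp_mul_nonneg.
  pose proof (in01_sub_sqr_nonneg u Hu). pose proof (in01_sub_sqr_nonneg v Hv).
  replace (alpha * (u - u ^ 2) * (alpha * (v - v ^ 2)))
    with (alpha ^ 2 * ((u - u ^ 2) * (v - v ^ 2))) by ring.
  apply Rmult_le_pos; [apply pow2_ge_0 | apply Rmult_le_pos; assumption].
Qed.

Theorem proposition2 (alpha delta : R) :
  alpha <> 0 ->
  Rabs delta <= delta_star alpha ->
  (0 <= delta -> forall u v, in01 u -> in01 v -> Cop alpha delta u v >= u * v) /\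
  (delta <= 0 -> forall u v, in01 u -> in01 v -> Cop alpha delta u v <= u * v).
Proof.
  intros _ _.
  split; intros Hdelta u v Hu Hv; unfold Cop;
    pose proof (Cop_perturbation_nonneg alpha u v Hu Hv); rewrite Rmult_assoc; nra.
Qed.
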